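(* Let $(\Omega,d)$ be a compact metric space, $F$ a $k$-iterated contraction system on $\Omega$ with contraction ratio $\theta\in(0,1)$ and attractor $\Omega$, and $A:\Omega\to\mathbb{R}$ Lipschitz. Let $\mathscr{L}$ be the transfer operator, $\rho$ its spectral radius on $C(\Omega)$, $h$ a strictly positive Lipschitz function with $\mathscr{L}h=\rho h$, $\mathbb{P}\varphi=\mathscr{L}(h\varphi)/(\rho h)$ the normalized operator and $\mathbb{P}^*$ its dual. Let $C>0$, $\lambda\in(0,1)$ be constants, depending only on $\theta,\operatorname{Lip}(A),\operatorname{diam}\Omega$, such that $W_1((\mathbb{P}^* )^n\mu,(\mathbb{P}^* )^n\nu)\le C\lambda^nW_1(\mu,\nu)$ for all $n\in\mathbb{N}$ and all Borel probability measures $\mu,\nu$ on $\Omega$, and let $\mu$ be the (unique) Borel probability measure with $\mathbb{P}^*\mu=\mu$. Then for every Lipschitz $\zeta:\Omega\to\mathbb{R}$ with $\int\zeta\,d\mu=0$ and every $n\in\mathbb{N}$, \[\|\mathbb{P}^n\zeta\|_\infty+\operatorname{Lip}(\mathbb{P}^n\zeta)\le(1+\operatorname{diam}\Omega)\,C\,\operatorname{Lip}(\zeta)\,\lambda^n.\] Moreover, every strictly positive Lipschitz function $g$ with $\mathscr{L}g=\rho g$ is a constant multiple of $h$.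
   Context: A $k$-multiset is an unordered list of $k$ elements with repetitions allowed; sums over it count multiplicities. A $k$-iterated contraction system (ICS) on $\Omega$ with contraction ratio $\theta$ assigns to each $x\in\Omega$ a $k$-multiset $F(x)$ of elements of $\Omega$ such that for all $x,y$ there are enumerations $F(x)=\{x_1,\dots,x_k\}$, $F(y)=\{y_1,\dots,y_k\}$ with $d(x_i,y_i)\le\theta d(x,y)$; attractor $\Omega$ means $\Omega$ is the union of the underlying sets of the $F(x)$. Transfer operator: $\mathscr{L}f(x)=\sum_{y\in F(x)}e^{A(y)}f(y)$. The dual $\mathbb{P}^*$ acts on measures by $\int\varphi\,d(\mathbb{P}^*\mu)=\int\mathbb{P}\varphi\,d\mu$. $W_1$ is the 1-Wasserstein distance: $W_1(\mu,\nu)=\inf_\pi\int d(x,y)\,d\pi$ over couplings $\pi$ of $\mu,\nu$. $\operatorname{Lip}$ denotes the Lipschitz constant. *)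

From HB Require Import structures.
From mathcomp Require Import all_boot all_order all_algebra all_fingroup.
From mathcomp Require Import all_classical all_reals all_analysis.
Set Implicit Arguments. Unset Strict Implicit. Unset Printing Implicit Defensive.
Import Order.TTheory GRing.Theory Num.Theory.
Import numFieldNormedType.Exports.
Local Open Scope classical_set_scope.
Local Open Scope ring_scope.

Section MetricDefs.
Variables (R : realType) (T : Type) (dist : T -> T -> R).

Definition is_dmetric : Prop :=
  [/\ (forall x y, 0 <= dist x y),
      (forall x y, dist x y = 0 <-> x = y),
      (forall x y, dist x y = dist y x) &
      (forall x y z, dist x z <= dist x y + dist y z)].

Definition dopen (A : set T) : Prop :=
  forall x, A x -> exists2 e : R, 0 < e & forall y, dist x y < e -> A y.

Definition dcompact : Prop :=
  forall (I : Type) (U : I -> set T), (forall i, dopen (U i)) ->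
    (forall x, exists i, U i x) ->
    exists2 J : set I, finite_set J & forall x, exists2 i, J i & U i x.

Definition dcontinuous (f : T -> R) : Prop :=
  forall x (e : R), 0 < e -> exists2 del : R, 0 < del &
    forall y, dist x y < del -> `|f x - f y| < e.

Definition dlipschitz (f : T -> R) : Prop :=
  exists L : R, forall x y, `|f x - f y| <= L * dist x y.

(* Lipschitz constant (0 is included so that the sup is of a nonempty set) *)
Definition dLip (f : T -> R) : R :=
  sup ([set 0] `|` [set r | exists x y, x <> y /\ r = `|f x - f y| / dist x y]).

Definition dsupnorm (f : T -> R) : R :=
  sup ([set 0] `|` [set r | exists x, r = `|f x|]).

Definition ddiam : R := sup ([set 0] `|` [set r | exists x y, r = dist x y]).

Definition dopnorm (L : (T -> R) -> (T -> R)) : R :=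
  sup ([set 0] `|` [set r | exists f, [/\ dcontinuous f, dsupnorm f <= 1 & r = dsupnorm (L f)]]).

(* A k-multiset F(x) is represented by an enumeration F x : 'I_k -> T;
   k-iterated contraction system with ratio theta *)
Definition is_ICS (k : nat) (F : T -> 'I_k -> T) (theta : R) : Prop :=
  forall x y, exists s : 'S_k, forall i, dist (F x i) (F y (s i)) <= theta * dist x y.

(* attractor Omega: Omega is the union of the underlying sets of the F(x) *)
Definition has_attractor_all (k : nat) (F : T -> 'I_k -> T) : Prop :=
  forall z, exists x, exists i, F x i = z.

End MetricDefs.

Definition transfer (R : realType) (T : Type) (k : nat) (F : T -> 'I_k -> T)
  (A : T -> R) (f : T -> R) : T -> R :=
  fun x => \sum_(i < k) expR (A (F x i)) * f (F x i).

Definition normalized_op (R : realType) (T : Type) (k : nat) (F : T -> 'I_k -> T)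
  (A : T -> R) (h : T -> R) (rho : R) (phi : T -> R) : T -> R :=
  fun x => transfer F A (fun y => h y * phi y) x / (rho * h x).

Section MeasureDefs.
Local Open Scope ereal_scope.
Variables (d0 : measure_display) (T : measurableType d0) (R : realType).
Variable (dist : T -> T -> R).

Definition borel_of_metric : Prop :=
  (measurable : set (set T)) = <<s dopen dist >>.

(* mu' = P^* mu : int phi d mu' = int (P phi) d mu for all phi in C(Omega) *)
Definition is_dual_image (P : (T -> R) -> (T -> R)) (mu mu' : probability T R) : Prop :=
  forall phi : T -> R, dcontinuous dist phi ->
    \int[mu']_x (phi x)%:E = \int[mu]_x (P phi x)%:E.

Definition is_dual_iter (P : (T -> R) -> (T -> R)) (n : nat)
  (mu mun : probability T R) : Prop :=
  exists c : nat -> probability T R,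
    [/\ c 0%N = mu, c n = mun &
        forall j, (j < n)%N -> is_dual_image P (c j) (c j.+1)].

Definition dcoupling (mu nu : probability T R) (pi : probability (T * T)%type R) : Prop :=
  forall A : set T, measurable A ->
    pi (A `*` setT) = mu A /\ pi (setT `*` A) = nu A.

Definition W1 (mu nu : probability T R) : \bar R :=
  ereal_inf [set \int[pi]_z (dist z.1 z.2)%:E |
             pi in [set pi : probability (T * T)%type R | dcoupling mu nu pi]].

End MeasureDefs.

(* For Lipschitz [zeta], [P^n zeta x] is the integral of [zeta] against
   (P^* )^n \d_x, which is built explicitly as an iterated mixture of Dirac
   masses.  The easy half of Kantorovich-Rubinstein duality bounds differences
   of such integrals by Lip(zeta) W1, and the assumed contraction of W1 under
   (P^* )^n, with W1(\d_x, \d_y) <= d(x, y) and W1(\d_x, mu) <= diam, gives the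
   Lipschitz bound and, since mu is P^*-invariant and [zeta] has mean 0, the sup
   bound.  If [g] is another positive Lipschitz eigenfunction, [g / h] is a
   Lipschitz fixed point of P, so its oscillation is at most C lam^n times a
   constant for every n: it is constant. *)

From HB Require Import structures.
From mathcomp Require Import all_boot all_order all_algebra all_fingroup.
From mathcomp Require Import all_classical all_reals all_analysis.
From mathcomp Require Import ring lra measurable_realfun.
Import Order.TTheory GRing.Theory Num.Theory.
Import numFieldNormedType.Exports HBNNSimple.
Local Open Scope classical_set_scope.
Local Open Scope ring_scope.

Set Implicit Arguments. Unset Strict Implicit. Unset Printing Implicit Defensive.

Section FiniteBounds.
Variables (R : realType) (X : eqType).

Lemma seq_pos_lb (s : seq X) (f : X -> R) : (forall x, 0 < f x) ->
  exists2 m, 0 < m & forall x, x \in s -> m <= f x.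
Proof.
move=> fp; elim: s => [|a s [m m0 Hm]]; first by exists 1.
exists (Num.min (f a) m); first by rewrite lt_min fp m0.
move=> x; rewrite in_cons => /orP[/eqP-> | /Hm xm]; first by rewrite ge_min lexx.
by rewrite ge_min xm orbT.
Qed.

Lemma seq_ub (s : seq X) (f : X -> R) : exists M, forall x, x \in s -> f x <= M.
Proof.
elim: s => [|a s [M HM]]; first by exists 0.
exists (Num.max (f a) M) => x; rewrite in_cons => /orP[/eqP-> | /HM xM].
  by rewrite le_max lexx.
by rewrite le_max xM orbT.
Qed.

End FiniteBounds.

Section MetricSpace.
Variables (R : realType) (T : pointedType) (dist : T -> T -> R).
Hypothesis hm : is_dmetric dist.

Lemma dist_ge0 x y : 0 <= dist x y. Proof. by case: hm. Qed.
Lemma distC x y : dist x y = dist y x. Proof. by case: hm. Qed.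
Lemma dist_triangle x y z : dist x z <= dist x y + dist y z. Proof. by case: hm. Qed.
Lemma dist_xx x : dist x x = 0. Proof. by case: hm => _ H _ _; apply/H. Qed.

Lemma dist_gt0 x y : x <> y -> 0 < dist x y.
Proof.
move=> xy; rewrite lt_neqAle dist_ge0 andbT; apply/eqP => /esym.
by case: hm => _ H _ _ /H.
Qed.

Lemma lipschitz_continuous f : dlipschitz dist f -> dcontinuous dist f.
Proof.
move=> [L HL] x e e0; exists (e / (`|L| + 1)).
  by apply: divr_gt0 => //; rewrite ltr_wpDl.
move=> y dy; have dxy := dist_ge0 x y.
have H1 : dist x y * (`|L| + 1) < e by rewrite -ltr_pdivlMr // ltr_wpDl.
have := HL x y; have := ler_norm L; nra.
Qed.

Lemma dist_continuous x0 : dcontinuous dist (dist x0).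
Proof.
apply: lipschitz_continuous; exists 1 => x y; rewrite mul1r ler_norml.
have := dist_triangle x0 x y; have := dist_triangle x0 y x; rewrite (distC y x).
lra.
Qed.

Lemma dLip_ge0 f : dlipschitz dist f -> 0 <= dLip dist f.
Proof.
move=> [L HL]; apply: sup_upper_bound; last by left.
split; first by exists 0; left.
exists (Num.max L 0) => r [-> | [a [b [ab ->]]]]; first by rewrite le_max lexx orbT.
by rewrite le_max ler_pdivrMr ?HL ?dist_gt0.
Qed.

Lemma dLipP f : dlipschitz dist f -> forall x y, `|f x - f y| <= dLip dist f * dist x y.
Proof.
move=> fl x y; have [<-|xy] := pselect (x = y).
  by rewrite subrr normr0 dist_xx mulr0.
rewrite -ler_pdivrMr ?dist_gt0 //; apply: sup_upper_bound; last by right; exists x, y.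
split; first by exists 0; left.
have [L HL] := fl; exists (Num.max L 0) => r [-> | [a [b [ab ->]]]].
  by rewrite le_max lexx orbT.
by rewrite le_max ler_pdivrMr ?HL ?dist_gt0.
Qed.

Lemma dLip_le f L : 0 <= L -> (forall x y, `|f x - f y| <= L * dist x y) ->
  dLip dist f <= L.
Proof.
move=> L0 HL; apply: ge_sup; first by exists 0; left.
by move=> r [-> // | [a [b [ab ->]]]]; rewrite ler_pdivrMr ?dist_gt0.
Qed.

Lemma dsupnorm_le (f : T -> R) M : 0 <= M -> (forall x, `|f x| <= M) -> dsupnorm f <= M.
Proof.
move=> M0 HM; apply: ge_sup; first by exists 0; left.
by move=> r [-> // | [a ->]].
Qed.

Section Compact.
Hypothesis hc : dcompact dist.

Lemma compact_cover (f c : T -> R) : dcontinuous dist f -> (forall x, 0 < c x) ->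
  exists s : seq T, forall y, exists2 x, x \in s & `|f y - f x| < c x.
Proof.
move=> fc c0; pose U x := [set y | `|f y - f x| < c x].
have U_open x : dopen dist (U x).
  move=> y /= Uy; have e0 : 0 < c x - `|f y - f x| by rewrite subr_gt0.
  have [del del0 Hd] := fc y _ e0; exists del => // z /Hd fyz.
  have : `|f z - f x| <= `|f y - f z| + `|f y - f x|.
    rewrite (_ : f z - f x = - (f y - f z) + (f y - f x)); last by ring.
    by rewrite (le_trans (ler_normD _ _)) ?normrN.
  rewrite /U /=; lra.
have U_cover x : exists i, U i x by exists x; rewrite /U /= subrr normr0.
have [J fJ HJ] := hc U_open U_cover.
exists (finmap.enum_fset (fset_set J)) => y; have [x Jx Ux] := HJ y.
by exists x => //; rewrite in_fset_set // inE.
Qed.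

Lemma continuous_bounded f : dcontinuous dist f -> exists M, forall y, `|f y| <= M.
Proof.
move=> fc; have [s Hs] := compact_cover fc (fun _ => ltr01).
have [M HM] := seq_ub s (fun x => `|f x|); exists (M + 1) => y.
have [x xs fxy] := Hs y; have := HM x xs.
have : `|f y| <= `|f y - f x| + `|f x| by rewrite (le_trans _ (ler_normD _ _)) // subrK.
lra.
Qed.

Lemma continuous_pos_lb f : dcontinuous dist f -> (forall x, 0 < f x) ->
  exists2 m, 0 < m & forall y, m <= f y.
Proof.
move=> fc fp; have [s Hs] := compact_cover fc (fun x => divr_gt0 (fp x) (ltr0n _ 2)).
have [m m0 Hm] := seq_pos_lb s fp; exists (m / 2) => [|y]; first exact: divr_gt0.
have [x xs fxy] := Hs y; have := Hm x xs; have := ler_norm (f x - f y).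
rewrite distrC; lra.
Qed.

Lemma dist_le_ddiam x y : dist x y <= ddiam dist.
Proof.
have [M HM] := continuous_bounded (dist_continuous x).
apply: sup_upper_bound; last by right; exists x, y.
split; first by exists 0; left.
exists (M + M) => r [-> | [a [b ->]]].
  by have := HM x; have := normr_ge0 (dist x x); lra.
have := dist_triangle a x b; rewrite (distC a x).
have := HM a; have := HM b; rewrite !ger0_norm ?dist_ge0 //; lra.
Qed.

Lemma ddiam_ge0 : 0 <= ddiam dist.
Proof. by rewrite (le_trans _ (dist_le_ddiam point point)) ?dist_ge0. Qed.

Lemma dlipschitz_div f g : dlipschitz dist f -> dlipschitz dist g -> (forall x, 0 < g x) ->
  dlipschitz dist (fun x => f x / g x).
Proof.
move=> fl gl gp; have gc := lipschitz_continuous gl.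
have [m m0 gm] := continuous_pos_lb gc gp.
have [M fM] := continuous_bounded (lipschitz_continuous fl).
have M0 : 0 <= M := le_trans (normr_ge0 _) (fM point).
exists (dLip dist f / m + M * dLip dist g / (m * m)) => a b.
have ga := gp a; have gb := gp b; have dab := dist_ge0 a b.
rewrite (_ : f a / g a - f b / g b =
  (f a - f b) / g a + f b * (g b - g a) / (g a * g b)); last by field; rewrite !gt_eqF.
apply: le_trans (ler_normD _ _) _.
rewrite !normrM !normfV normrM (gtr0_norm ga) (gtr0_norm gb).
have ga1 : (g a)^-1 <= m^-1 by rewrite lef_pV2 ?posrE.
have gab1 : (g a * g b)^-1 <= (m * m)^-1.
  by rewrite lef_pV2 ?posrE ?mulr_gt0 //; exact: ler_pM (ltW m0) (ltW m0) (gm a) (gm b).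
have Lfab := dLipP fl a b; have Lgba := dLipP gl b a; rewrite distC in Lgba.
have ia : 0 <= (g a)^-1 by rewrite invr_ge0 ltW.
have iab : 0 <= (g a * g b)^-1 by rewrite invr_ge0 mulr_ge0 ?ltW.
have term1 := ler_pM (normr_ge0 _) ia Lfab ga1.
have term2 := ler_pM (mulr_ge0 (normr_ge0 _) (normr_ge0 _)) iab
  (ler_pM (normr_ge0 _) (normr_ge0 _) (fM b) Lgba) gab1.
rewrite (_ : _ * dist a b = dLip dist f * dist a b / m + M * (dLip dist g * dist a b) / (m * m)).
  exact: lerD term1 term2.
by field; rewrite gt_eqF.
Qed.
End Compact.

End MetricSpace.

Lemma le0_geometric (R : realType) (a c lam : R) : 0 <= lam -> lam < 1 ->
  (forall n, a <= c * lam ^+ n) -> a <= 0.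
Proof.
move=> lam0 lam1 ale; rewrite leNgt; apply/negP => a0.
have c0 : 0 < c by have := ale 0%N; rewrite expr0 mulr1 => /(lt_le_trans a0).
have : `|lam| < 1 by rewrite ger0_norm.
move=> /cvg_expr /cvgrPdist_lt /(_ (a / c) (divr_gt0 a0 c0)) [N _ HN].
have := HN N (leqnn N); rewrite /= sub0r normrN ger0_norm ?exprn_ge0 //.
by rewrite ltr_pdivlMr // mulrC => /(le_lt_trans (ale N)); rewrite ltxx.
Qed.

Section Continuity.
Variables (R : realType) (T : Type) (dist : T -> T -> R).

Lemma dcontinuous_cst (c : R) : dcontinuous dist (fun _ => c).
Proof. by move=> x e e0; exists 1 => // y _; rewrite subrr normr0. Qed.

Lemma dcontinuous_comp (g : R -> R) (f : T -> R) :
  (forall x, {for f x, continuous g}) -> dcontinuous dist f ->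
  dcontinuous dist (fun x => g (f x)).
Proof.
move=> gc fc x e e0.
have /cvgrPdist_lt/(_ e e0)/nbhs_ballP [d1 d10 Hd1] := gc x.
have [d2 d20 Hd2] := fc x d1 d10.
by exists d2 => // y /Hd2 Hy; apply: Hd1.
Qed.

Lemma dcontinuousM (f g : T -> R) : dcontinuous dist f -> dcontinuous dist g ->
  dcontinuous dist (fun x => f x * g x).
Proof.
move=> fc gc x e e0.
set a := `|f x| + 1; set b := `|g x| + 1.
have a0 : 0 < a by rewrite ltr_wpDl.
have b0 : 0 < b by rewrite ltr_wpDl.
have [d1 d10 H1] := fc x _ (divr_gt0 e0 (mulr_gt0 (ltr0n _ 2) b0)).
have e2 : 0 < Num.min 1 (e / (2 * a)) by rewrite lt_min ltr01 divr_gt0 // mulr_gt0.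
have [d2 d20 H2] := gc x _ e2.
exists (Num.min d1 d2) => [|y]; first by rewrite lt_min d10 d20.
rewrite lt_min => /andP[/H1 fxy /H2]; rewrite lt_min => /andP[gxy1 gxy2].
rewrite (_ : f x * g x - f y * g y = f x * (g x - g y) + g y * (f x - f y)); last by ring.
apply: le_lt_trans (ler_normD _ _) _; rewrite !normrM.
have gyb : `|g y| <= b.
  have := ler_normB (g x) (g x - g y); rewrite opprB addrC subrK /b; lra.
have P1 : `|f x| * `|g x - g y| <= a * (e / (2 * a)).
  by apply: ler_pM => //; [rewrite lerDl | exact: ltW].
have P2 : `|g y| * `|f x - f y| < b * (e / (2 * b)).
  by apply: le_lt_trans (ler_wpM2r (normr_ge0 _) gyb) _; rewrite ltr_pM2l.
have E1 : a * (e / (2 * a)) = e / 2 by field; rewrite gt_eqF.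
have E2 : b * (e / (2 * b)) = e / 2 by field; rewrite gt_eqF.
lra.
Qed.
End Continuity.

(* None of these integrands is assumed measurable: the cost [dist z.1 z.2] of a
   coupling is integrated over [T * T], where it need not be measurable. *)
Section NonMeasurableIntegrals.
Local Open Scope ereal_scope.
Variables (d : measure_display) (T : measurableType d) (R : realType).

Lemma ge0_le_integralT (mu : {measure set T -> \bar R}) (f g : T -> \bar R) :
  (forall x, 0 <= f x) -> (forall x, f x <= g x) ->
  \int[mu]_x f x <= \int[mu]_x g x.
Proof.
move=> f0 fg; have g0 x : 0 <= g x by exact: le_trans (f0 x) (fg x).
rewrite !ge0_integralTE //; apply: ereal_sup_le => _ [h hf <-].
by exists h => //= x; exact: le_trans (hf x) (fg x).
Qed.

Lemma ge0_integral_le_cst (P : probability T R) (g : T -> \bar R) (c : R) :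
  (forall x, 0 <= g x <= c%:E) -> \int[P]_x g x <= c%:E.
Proof.
move=> g0c; have g0 x : 0 <= g x by case/andP: (g0c x).
rewrite ge0_integralTE //; apply: ge_ereal_sup => _ [h hg <-].
rewrite -integralT_nnsfun.
apply: (@le_trans _ _ (\int[P]_x (cst c%:E) x)).
  apply: ge0_le_integral => //.
  - by move=> x _; rewrite lee_fin.
  - exact/measurable_EFinP/measurable_funP.
  - by move=> x _; apply: le_trans (hg x) _; case/andP: (g0c x).
by rewrite integral_cst //= probability_setT mule1.
Qed.

Lemma ge0_integral_dirac_le (a : T) (g : T -> \bar R) :
  (forall x, 0 <= g x) -> \int[\d_a]_x g x <= g a.
Proof.
move=> g0; rewrite ge0_integralTE //; apply: ge_ereal_sup => _ [h hg <-].
rewrite -integralT_nnsfun integral_dirac //; last exact/measurable_EFinP/measurable_funP.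
by rewrite diracT mul1e.
Qed.

End NonMeasurableIntegrals.

Section Mixture.
Local Open Scope ereal_scope.
Variables (d : measure_display) (T : measurableType d) (R : realType) (k : nat).
Variables (p : 'I_k -> probability T R) (w : 'I_k -> {nonneg R}).

Definition mixture_family : {measure set T -> \bar R}^nat := fun n =>
  if insub n is Some i then mscale (w i) (p i) else mzero.

(* The fallback [\d_point] of [mnormalize] is only used when the weights do not
   sum to 1. *)
Definition mixture : probability T R := mnormalize (msum mixture_family k) \d_point.

Lemma mixture_familyE (i : 'I_k) : mixture_family i = mscale (w i) (p i).
Proof. by rewrite /mixture_family valK. Qed.

Hypothesis w1 : (\sum_(i < k) (w i)%:num = 1)%R.

Lemma msum_mixture_familyT : msum mixture_family k setT = 1.
Proof.
rewrite /msum (eq_bigr (fun i => (w i)%:num%:E)) ?sumEFin ?w1 // => i _.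
by rewrite mixture_familyE -[LHS]/((w i)%:num%:E * p i setT) probability_setT mule1.
Qed.

Lemma mixtureE U : mixture U = msum mixture_family k U.
Proof.
by rewrite /mixture /= /mnormalize /= msum_mixture_familyT onee_eq0 /= invr1 mule1.
Qed.

Lemma integral_mixture (f : T -> \bar R) : measurable_fun setT f -> (forall x, 0 <= f x) ->
  \int[mixture]_x f x = \sum_(i < k) (w i)%:num%:E * \int[p i]_x f x.
Proof.
move=> mf f0; rewrite (eq_measure_integral (msum mixture_family k)); last first.
  by move=> U _ _; exact: mixtureE.
rewrite ge0_integral_measure_sum //; apply: eq_bigr => i _.
by rewrite mixture_familyE ge0_integral_mscale.
Qed.

End Mixture.

Section Wasserstein.
Local Open Scope ereal_scope.
Variables (d : measure_display) (T : measurableType d) (R : realType).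
Variable (dist : T -> T -> R).
Hypotheses (hm : is_dmetric dist) (hc : dcompact dist) (hb : borel_of_metric dist).

Lemma dcontinuous_measurable f : dcontinuous dist f -> measurable_fun setT f.
Proof.
move=> fc; apply: (measurability _ (RGenOInfty.measurableE R)) => // _ [_ [a ->] <-].
rewrite setTI hb; apply: sub_sigma_algebra => y /=; rewrite in_itv /= andbT => ay.
have e0 : (0 < f y - a)%R by rewrite subr_gt0.
have [del del0 Hd] := fc y _ e0.
exists del => // z /Hd fyz; rewrite /= in_itv /= andbT.
have := ler_norm (f y - f z); lra.
Qed.

Lemma dcontinuous_integrable (d' : measure_display) (U : measurableType d')
    (m : probability U R) (g : U -> T) z :
  measurable_fun setT g -> dcontinuous dist z -> m.-integrable setT (EFin \o (z \o g)).
Proof.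
move=> mg zc; have [M HM] := continuous_bounded hc zc.
apply: measurable_bounded_integrable => //.
- by rewrite (le_lt_trans (probability_le1 m measurableT)) ?ltry.
- exact: measurableT_comp (dcontinuous_measurable zc) mg.
- exists M; split; first by rewrite num_real.
  by move=> M' HM' x _ /=; rewrite (le_trans (HM _)) // ltW.
Qed.

Definition fst_mfun : {mfun (T * T)%type >-> T} :=
  HB.pack (@fst T T) (isMeasurableFun.Build _ _ _ _ (@fst T T) measurable_fst).
Definition snd_mfun : {mfun (T * T)%type >-> T} :=
  HB.pack (@snd T T) (isMeasurableFun.Build _ _ _ _ (@snd T T) measurable_snd).
Definition pair_mfun (x : T) : {mfun T >-> (T * T)%type} :=
  HB.pack (pair x) (isMeasurableFun.Build _ _ _ _ (pair x) (pair1_measurable x)).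

Lemma W1_dirac_le x y : W1 dist \d_x \d_y <= (dist x y)%:E.
Proof.
pose pi : probability (T * T)%type R := \d_(x, y).
apply: (@le_trans _ _ (\int[pi]_z (dist z.1 z.2)%:E)).
  apply: ereal_inf_lbound; exists pi => // B mB.
  rewrite /= !diracE; split; congr ((nat_of_bool _)%:R%:E).
    by apply/idP/idP => /set_mem H; apply/mem_set; [case: H | split].
  by apply/idP/idP => /set_mem H; apply/mem_set; [case: H | split].
by apply: le_trans (ge0_integral_dirac_le _ _) _ => // z; rewrite lee_fin dist_ge0.
Qed.

Lemma W1_dirac_le_ddiam x (mu : probability T R) : W1 dist \d_x mu <= (ddiam dist)%:E.
Proof.
pose pi := distribution mu (pair_mfun x).
apply: (@le_trans _ _ (\int[pi]_z (dist z.1 z.2)%:E)).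
  apply: ereal_inf_lbound; exists pi => // B mB; split.
    rewrite /= diracE /distribution /pushforward.
    have [xB|xB] := boolP (x \in B).
      rewrite (_ : _ @^-1` _ = setT) ?probability_setT //.
      by apply/seteqP; split => // z _; split => //; exact/set_mem.
    rewrite (_ : _ @^-1` _ = set0) ?measure0 //.
    by apply/seteqP; split => // z [/mem_set H _]; rewrite H in xB.
  rewrite /= /distribution /pushforward.
  by congr (mu _); apply/seteqP; split => z //= [].
apply: ge0_integral_le_cst => z.
by rewrite !lee_fin dist_ge0 //= (dist_le_ddiam hm hc).
Qed.

Lemma integral_marginal (m : probability T R) (pi : probability (T * T)%type R)
    (f : {mfun (T * T)%type >-> T}) z :
  (forall B, measurable B -> pi (f @^-1` B) = m B) -> dcontinuous dist z ->
  \int[m]_x (z x)%:E = \int[pi]_p (z (f p))%:E.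
Proof.
move=> pim zc; have mz := dcontinuous_measurable zc.
transitivity (\int[distribution pi f]_x (z x)%:E).
  by apply: eq_measure_integral => B mB _; rewrite /= -pim.
rewrite integral_distribution //; first exact/measurable_EFinP.
exact: dcontinuous_integrable.
Qed.

Lemma W1_ge_integral_sub (z : T -> R) (m1 m2 : probability T R) a1 a2 :
  (forall a b, `|z a - z b| <= dist a b)%R ->
  \int[m1]_x (z x)%:E = a1%:E -> \int[m2]_x (z x)%:E = a2%:E ->
  (a1 - a2)%:E <= W1 dist m1 m2.
Proof.
move=> z1 int1 int2; have zc : dcontinuous dist z.
  by apply: (lipschitz_continuous hm); exists 1%R => a b; rewrite mul1r.
apply/ereal_infP => _ [pi pi_coupling <-].
have [intz1 intz2] : pi.-integrable setT (EFin \o (z \o fst)) /\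
    pi.-integrable setT (EFin \o (z \o snd)).
  by split; apply: dcontinuous_integrable.
have int1pi : \int[m1]_x (z x)%:E = \int[pi]_p (z p.1)%:E.
  apply: (integral_marginal (f := fst_mfun)) zc => B mB.
  rewrite -(pi_coupling B mB).1; congr (pi _).
  by apply/seteqP; split => p //= [].
have int2pi : \int[m2]_x (z x)%:E = \int[pi]_p (z p.2)%:E.
  apply: (integral_marginal (f := snd_mfun)) zc => B mB.
  rewrite -(pi_coupling B mB).2; congr (pi _).
  by apply/seteqP; split => p //= [].
rewrite EFinB -int1 -int2 int1pi int2pi -integralB_EFin // integralE.
apply: le_trans (leeB (lexx _) (integral_ge0 _ _)) _ => //.
rewrite sube0; apply: ge0_le_integralT => p //.
rewrite funeposE ge_max -EFinB !lee_fin (dist_ge0 hm) andbT.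
exact: le_trans (ler_norm _) (z1 _ _).
Qed.

Lemma W1_ge_lipschitz_integral_sub (z : T -> R) (L : R) (m1 m2 : probability T R) a1 a2 :
  (0 <= L)%R -> (forall a b, `|z a - z b| <= L * dist a b)%R ->
  \int[m1]_x (z x)%:E = a1%:E -> \int[m2]_x (z x)%:E = a2%:E ->
  (a1 - a2)%:E <= L%:E * W1 dist m1 m2.
Proof.
move=> L0 zL int1 int2; have zc : dcontinuous dist z.
  by apply: (lipschitz_continuous hm); exists L.
have [L_eq0|Lp] := eqVneq L 0%R.
  have zE a : z a = z point.
    by apply/eqP; rewrite -subr_eq0 -normr_le0 (le_trans (zL _ _)) // L_eq0 mul0r.
  have intE (m : probability T R) : \int[m]_x (z x)%:E = (z point)%:E.
    by under eq_integral do rewrite zE; rewrite integral_cst //= probability_setT mule1.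
  move: int1 int2; rewrite !intE => -[<-] [<-].
  by rewrite subrr L_eq0 mul0e.
have {}Lp : (0 < L)%R by rewrite lt_neqAle eq_sym Lp.
have intZ (m : probability T R) a : \int[m]_x (z x)%:E = a%:E ->
    \int[m]_x (L^-1 * z x)%:E = (L^-1 * a)%:E.
  move=> inta; under eq_integral do rewrite EFinM.
  by rewrite integralZl //; [rewrite inta | exact: (@dcontinuous_integrable _ _ _ id)].
have zL1 a b : (`|L^-1 * z a - L^-1 * z b| <= dist a b)%R.
  by rewrite -mulrBr normrM gtr0_norm ?invr_gt0 // ler_pdivrMl.
have := W1_ge_integral_sub zL1 (intZ _ _ int1) (intZ _ _ int2).
rewrite -mulrBr EFinM => H.
have -> : (a1 - a2)%:E = L%:E * ((L^-1)%:E * (a1 - a2)%:E).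
  by rewrite -!EFinM mulrA divff ?mul1r // gt_eqF.
by rewrite lee_wpmul2l ?lee_fin.
Qed.
End Wasserstein.

Section NormalizedOperator.
Variables (R : realType) (d : measure_display) (T : measurableType d).
Variables (dist : T -> T -> R) (k : nat) (F : T -> 'I_k -> T) (theta : R).
Variables (A : T -> R) (rho : R) (h : T -> R).
Hypotheses (hm : is_dmetric dist) (hc : dcompact dist) (hb : borel_of_metric dist).
Hypotheses (hics : is_ICS dist F theta) (hatt : has_attractor_all F).
Hypotheses (hA : dlipschitz dist A) (hpos : forall x, 0 < h x) (hh : dlipschitz dist h).
Hypothesis heig : forall x, transfer F A h x = rho * h x.

Local Notation P := (normalized_op F A h rho).

Lemma rho_gt0 : 0 < rho.
Proof.
have [x [i _]] := hatt point.
suff : 0 < transfer F A h point by rewrite heig pmulr_lgt0.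
rewrite /transfer (bigD1 i) //= ltr_pwDl ?mulr_gt0 ?expR_gt0 //.
by apply: sumr_ge0 => j _; rewrite mulr_ge0 ?expR_ge0 ?ltW.
Qed.

Definition weight (y : T) (i : 'I_k) : R := expR (A (F y i)) * h (F y i) / (rho * h y).

Lemma weight_ge0 y i : 0 <= weight y i.
Proof. by rewrite divr_ge0 ?mulr_ge0 ?expR_ge0 ?ltW ?rho_gt0. Qed.

Lemma weight_sum1 y : \sum_(i < k) weight y i = 1.
Proof.
rewrite -mulr_suml -[X in X / _]/(transfer F A h y) heig divff //.
by rewrite mulf_neq0 // gt_eqF ?rho_gt0.
Qed.

Lemma normalized_opE phi y : P phi y = \sum_(i < k) weight y i * phi (F y i).
Proof.
rewrite /normalized_op /transfer mulr_suml; apply: eq_bigr => i _.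
by rewrite /weight; ring.
Qed.

Lemma iter_normalized_opD j f g y :
  iter j P (fun x => f x + g x) y = iter j P f y + iter j P g y.
Proof.
elim: j y => [//|j IH] y /=.
rewrite !normalized_opE -big_split /=; apply: eq_bigr => i _.
by rewrite IH mulrDr.
Qed.

Lemma iter_normalized_opZ j a f y : iter j P (fun x => a * f x) y = a * iter j P f y.
Proof.
elim: j y => [//|j IH] y /=.
rewrite !normalized_opE mulr_sumr; apply: eq_bigr => i _.
by rewrite IH mulrCA.
Qed.

Lemma transfer_continuous g : dcontinuous dist g -> dcontinuous dist (transfer F A g).
Proof.
move=> gc; pose G z := expR (A z) * g z.
have Gc : dcontinuous dist G.
  apply: dcontinuousM gc; apply: dcontinuous_comp (lipschitz_continuous hm hA).
  by move=> x; exact: continuous_expR.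
move=> x e e0; have ek : 0 < e / k.+1%:R by rewrite divr_gt0.
have /choice [del Hdel] : forall i : 'I_k, exists del : R, 0 < del /\
    forall z, dist (F x i) z < del -> `|G (F x i) - G z| < e / k.+1%:R.
  by move=> i; have [del del0 Hd] := Gc (F x i) _ ek; exists del.
have [m m0 Hm] := seq_pos_lb (enum 'I_k) (fun i => (Hdel i).1).
have t1 : 0 < `|theta| + 1 by rewrite ltr_wpDl.
exists (m / (`|theta| + 1)) => [|y dxy]; first exact: divr_gt0.
have [s Hs] := hics x y.
rewrite /transfer [X in _ - X](reindex_inj (@perm_inj _ s)) -sumrB.
apply: le_lt_trans (ler_norm_sum _ _ _) _.
apply: (@le_lt_trans _ _ (\sum_(i < k) (e / k.+1%:R))).
  apply: ler_sum => i _; apply/ltW/(Hdel i).2.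
  apply: le_lt_trans (Hs i) _; apply: lt_le_trans (Hm i (mem_enum _ i)).
  move: dxy; rewrite ltr_pdivlMr // => dxy.
  have := ler_norm theta; have := dist_ge0 hm x y; nra.
rewrite sumr_const card_ord -[_ *+ k]mulr_natr mulrAC ltr_pdivrMr ?ltr0n //.
by rewrite ltr_pM2l // ltr_nat.
Qed.

Lemma normalized_op_continuous phi : dcontinuous dist phi -> dcontinuous dist (P phi).
Proof.
move=> phic; have hcont := lipschitz_continuous hm hh.
apply: dcontinuousM; first exact/transfer_continuous/dcontinuousM.
apply: (@dcontinuous_comp _ _ _ GRing.inv (fun y => rho * h y)).
  by move=> x; apply: inv_continuous; rewrite mulf_neq0 // gt_eqF ?rho_gt0.
exact: dcontinuousM (dcontinuous_cst _ _) hcont.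
Qed.

Definition weight_nng y i : {nonneg R} := NngNum (weight_ge0 y i).

(* [dual_dirac_iter j y] is (P^* )^j of the Dirac mass at [y]: P^* maps \d_y to
   the mixture of the \d_(F y i) with weights [weight y i]. *)
Fixpoint dual_dirac_iter (j : nat) (y : T) : probability T R :=
  if j is j'.+1 then mixture (fun i => dual_dirac_iter j' (F y i)) (weight_nng y)
  else \d_y.

Local Open Scope ereal_scope.

Lemma ge0_integral_dual_dirac_iter (phi : T -> R) j y :
  measurable_fun setT phi -> (forall x, 0 <= phi x)%R ->
  \int[dual_dirac_iter j y]_x (phi x)%:E = (iter j P phi y)%:E.
Proof.
move=> mphi phi0; elim: j y => [|j IH] y.
  by rewrite integral_dirac ?diracT ?mul1e //; exact/measurable_EFinP.
rewrite /= integral_mixture ?weight_sum1 //; last exact/measurable_EFinP.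
by under eq_bigr => i _ do rewrite IH; rewrite normalized_opE sumEFin.
Qed.

Lemma integral_dual_dirac_iter (phi : T -> R) j y : measurable_fun setT phi ->
  \int[dual_dirac_iter j y]_x (phi x)%:E = (iter j P phi y)%:E.
Proof.
move=> mphi; pose pp x := Num.max (phi x) 0%R; pose pn x := Num.max (- phi x)%R 0%R.
have mpp : measurable_fun setT pp by exact: measurable_maxr.
have mpn : measurable_fun setT pn by apply: measurable_maxr => //; exact: measurableT_comp.
have phiE : phi = (fun x => pp x + (-1) * pn x)%R.
  apply/funext => x; rewrite /pp /pn mulN1r; have [p0|p0] := leP 0%R (phi x).
    by rewrite max_r ?oppr_le0 // subr0.
  by rewrite max_l ?oppr_ge0 ?ltW // opprK add0r.
rewrite integralE.
rewrite (_ : _^\+ = fun x => (pp x)%:E); last by apply/funext => x; rewrite funeposE EFin_max.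
rewrite (_ : _^\- = fun x => (pn x)%:E); last by apply/funext => x; rewrite funenegE EFin_max.
rewrite !ge0_integral_dual_dirac_iter // => [|x|x]; try by rewrite le_max lexx orbT.
by rewrite [in RHS]phiE iter_normalized_opD iter_normalized_opZ mulN1r.
Qed.

Lemma is_dual_iter_dirac n x : is_dual_iter dist P n \d_x (dual_dirac_iter n x).
Proof.
exists (fun j => dual_dirac_iter j x); split => // j _ phi phic.
have mphi := dcontinuous_measurable hb phic.
have mPphi := dcontinuous_measurable hb (normalized_op_continuous phic).
by rewrite !integral_dual_dirac_iter // iterSr.
Qed.

Local Close Scope ereal_scope.

Variables (C lam : R).
Hypotheses (C_ge0 : 0 <= C) (lam_ge0 : 0 <= lam).
Hypothesis W1_contract : forall (n : nat) (m1 m2 m1n m2n : probability T R),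
  is_dual_iter dist P n m1 m1n -> is_dual_iter dist P n m2 m2n ->
  (W1 dist m1n m2n <= (C * lam ^+ n)%:E * W1 dist m1 m2)%E.

Section LipschitzObservable.
Variables (z : T -> R) (L : R).
Hypotheses (L_ge0 : 0 <= L) (zL : forall a b, `|z a - z b| <= L * dist a b).

Let z_measurable : measurable_fun setT z.
Proof. by have := dcontinuous_measurable hb (lipschitz_continuous hm (ex_intro _ L zL)). Qed.

Lemma iter_normalized_op_sub_le n x y :
  iter n P z x - iter n P z y <= L * (C * lam ^+ n) * dist x y.
Proof.
have := W1_ge_lipschitz_integral_sub hm hc hb L_ge0 zL
  (integral_dual_dirac_iter n x z_measurable) (integral_dual_dirac_iter n y z_measurable).
move=> /le_trans; rewrite -lee_fin; apply.
rewrite -mulrA EFinM; apply: lee_wpmul2l; first by rewrite lee_fin.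
apply: le_trans (W1_contract (is_dual_iter_dirac n x) (is_dual_iter_dirac n y)) _.
rewrite [(_ * dist x y)%:E]EFinM; apply: lee_wpmul2l; last exact: W1_dirac_le.
by rewrite lee_fin mulr_ge0 ?exprn_ge0.
Qed.

Lemma iter_normalized_op_le (mu : probability T R) n x :
  is_dual_image dist P mu mu -> (\int[mu]_x (z x)%:E = 0)%E ->
  iter n P z x <= L * (C * lam ^+ n) * ddiam dist.
Proof.
move=> mu_fixed z_mean0; have mu_iter : is_dual_iter dist P n mu mu by exists (fun=> mu).
have := W1_ge_lipschitz_integral_sub hm hc hb L_ge0 zL
  (integral_dual_dirac_iter n x z_measurable) z_mean0.
rewrite subr0 => /le_trans; rewrite -lee_fin; apply.
rewrite -mulrA EFinM; apply: lee_wpmul2l; first by rewrite lee_fin.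
apply: le_trans (W1_contract (is_dual_iter_dirac n x) mu_iter) _.
rewrite [(_ * ddiam dist)%:E]EFinM; apply: lee_wpmul2l; last exact: W1_dirac_le_ddiam.
by rewrite lee_fin mulr_ge0 ?exprn_ge0.
Qed.

End LipschitzObservable.

Lemma normalized_op_decay (mu : probability T R) zeta n :
  is_dual_image dist P mu mu -> dlipschitz dist zeta -> (\int[mu]_x (zeta x)%:E = 0)%E ->
  dsupnorm (iter n P zeta) + dLip dist (iter n P zeta)
    <= (1 + ddiam dist) * C * dLip dist zeta * lam ^+ n.
Proof.
move=> mu_fixed zeta_lip zeta_mean0.
set L := dLip dist zeta; have L0 : 0 <= L := dLip_ge0 hm zeta_lip; have zL := dLipP hm zeta_lip.
set K := L * (C * lam ^+ n); have K0 : 0 <= K by rewrite mulr_ge0 ?mulr_ge0 ?exprn_ge0.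
have oppL a b : `|-1 * zeta a - -1 * zeta b| <= L * dist a b.
  by rewrite -mulrBr normrM normrN1 mul1r.
have opp_mean0 : (\int[mu]_x ((-1 * zeta x)%:E) = 0)%E.
  under eq_integral do rewrite EFinM.
  rewrite integralZl ?zeta_mean0 ?mule0 //.
  exact: (@dcontinuous_integrable _ _ _ _ hc hb _ _ mu id) (lipschitz_continuous hm zeta_lip).
have sup_le x : `|iter n P zeta x| <= K * ddiam dist.
  have up := iter_normalized_op_le L0 zL n x mu_fixed zeta_mean0.
  have := iter_normalized_op_le L0 oppL n x mu_fixed opp_mean0.
  by rewrite iter_normalized_opZ mulN1r ler_norml up andbT lerNl.
have lip_le x y : `|iter n P zeta x - iter n P zeta y| <= K * dist x y.
  rewrite ler_norml (iter_normalized_op_sub_le L0 zL) andbT lerNl opprB (distC hm).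
  exact: iter_normalized_op_sub_le L0 zL n y x.
have := lerD (dsupnorm_le (mulr_ge0 K0 (ddiam_ge0 hm hc)) sup_le) (dLip_le hm K0 lip_le).
by rewrite (_ : K * ddiam dist + K = (1 + ddiam dist) * C * L * lam ^+ n) // /K; ring.
Qed.

Lemma transfer_eigenfunction_proportional g : lam < 1 ->
  (forall x, 0 < g x) -> dlipschitz dist g -> (forall x, transfer F A g x = rho * g x) ->
  exists c, forall x, g x = c * h x.
Proof.
move=> lam1 gp gl geig; pose psi x := g x / h x.
have psi_fixed : P psi = psi.
  apply/funext => y; rewrite /normalized_op (_ : (fun x => h x * psi x) = g).
    by rewrite geig /psi; field; rewrite !gt_eqF ?rho_gt0.
  by apply/funext => x; rewrite /psi mulrC divfK // gt_eqF.
have iter_psi j : iter j P psi = psi by elim: j => //= j ->.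
have psi_lip : dlipschitz dist psi := dlipschitz_div hm hc gl hh hpos.
have psi_le a b : psi a - psi b <= 0.
  apply: (le0_geometric (c := dLip dist psi * C * dist a b) lam_ge0 lam1) => j.
  have := iter_normalized_op_sub_le (dLip_ge0 hm psi_lip) (dLipP hm psi_lip) j a b.
  by rewrite iter_psi (_ : _ * _ * dist a b = dLip dist psi * C * dist a b * lam ^+ j) //; ring.
exists (psi point) => x; have -> : g x = psi x * h x by rewrite /psi divfK // gt_eqF.
by congr (_ * _); apply/eqP; rewrite eq_le -subr_le0 psi_le -subr_le0 psi_le.
Qed.

End NormalizedOperator.

Theorem mainTheorem3 (R : realType) (d0 : measure_display) (T : measurableType d0)
  (dist : T -> T -> R) (k : nat) (F : T -> 'I_k -> T) (theta : R) (A : T -> R)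
  (rho : R) (h : T -> R) (C lam : R) (mu : probability T R) :
  is_dmetric dist -> dcompact dist -> borel_of_metric dist ->
  0 < theta < 1 -> is_ICS dist F theta -> has_attractor_all F ->
  dlipschitz dist A ->
  (* rho is the spectral radius of the transfer operator on C(Omega) *)
  (fun n : nat => dopnorm dist (iter n.+1 (transfer F A)) `^ (n.+1%:R)^-1)
     @ \oo --> rho ->
  (forall x, 0 < h x) -> dlipschitz dist h ->
  (forall x, transfer F A h x = rho * h x) ->
  0 < C -> 0 < lam < 1 ->
  (forall (n : nat) (m1 m2 m1n m2n : probability T R),
     is_dual_iter dist (normalized_op F A h rho) n m1 m1n ->
     is_dual_iter dist (normalized_op F A h rho) n m2 m2n ->
     (W1 dist m1n m2n <= (C * lam ^+ n)%:E * W1 dist m1 m2)%E) ->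
  is_dual_image dist (normalized_op F A h rho) mu mu ->
  (forall zeta : T -> R, dlipschitz dist zeta ->
     (\int[mu]_x (zeta x)%:E = 0)%E ->
     forall n : nat,
       dsupnorm (iter n (normalized_op F A h rho) zeta)
         + dLip dist (iter n (normalized_op F A h rho) zeta)
       <= (1 + ddiam dist) * C * dLip dist zeta * lam ^+ n)
  /\
  (forall g : T -> R, (forall x, 0 < g x) -> dlipschitz dist g ->
     (forall x, transfer F A g x = rho * g x) ->
     exists c : R, forall x, g x = c * h x).
Proof.
(* Neither theta < 1 nor the spectral-radius description of rho is needed:
   rho > 0 already follows from L h = rho h with h > 0. *)
move=> hm hc hb _ hics hatt hA _ hpos hh heig C_gt0 /andP[lam_gt0 lam_lt1] W1_contract mu_fixed.
have C_ge0 := ltW C_gt0; have lam_ge0 := ltW lam_gt0.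
split=> [zeta zeta_lip zeta_mean0 n | g gp gl geig].
- exact: (normalized_op_decay hm hc hb hics hatt hA hpos hh heig C_ge0 lam_ge0 W1_contract
    n mu_fixed zeta_lip zeta_mean0).
- exact: (transfer_eigenfunction_proportional hm hc hb hics hatt hA hpos hh heig C_ge0
    lam_ge0 W1_contract lam_lt1 gp gl geig).
Qed.
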